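(* Let $(X,d)$ and $(Y,d')$ be proper metric spaces and $\pi:(Y,\varepsilon_{d'})\to(X,\varepsilon_d)$ a continuous coarse equivalence with a continuous quasi-inverse $\varpi$. If $X+_fW$ is a compactification with the coarse Karlsson property, then $Y+_{f^\ast}W$ has the coarse Karlsson property, where $f^\ast(A)=\mathrm{Cl}_W\big(f(\mathrm{Cl}_X(\pi(A)))\big)$ for $A$ closed in $Y$.
   Context: For an admissible map $f$ (from closed sets of $X$ to closed sets of $W$, sending $\emptyset$ to $\emptyset$ and preserving finite unions), $X+_fW$ is $X\sqcup W$ with closed sets the $D$ with $D\cap X$ closed in $X$, $D\cap W$ closed in $W$, $f(D\cap X)\subseteq D$; a compactification means it is compact Hausdorff with $X$ dense. $\varepsilon_d$ is the bounded coarse structure of $d$; coarse maps, closeness and quasi-inverses are in the sense of Roe. $\mathfrak{U}_f$ is the unique uniformity of $X+_fW$; $S$ is $u$-small if $S\times S\subseteq u$. A coarse arc between $x,y$ is a coarse embedding $\lambda:[0,t]\to X$ with $\lambda(0)=x,\lambda(t)=y$. A set $\Upsilon$ of coarse arcs is equicoarse if (1) for every $r>0$ there is $s>0$ with $d(\lambda(a),\lambda(b))<s$ whenever $\lambda\in\Upsilon$, $|a-b|<r$; (2) for every $r>0$ there is $s>0$ with $|a-b|<s$ whenever $\lambda\in\Upsilon$, $d(\lambda(a),\lambda(b))<r$. A compactification $X+_fW$ has the coarse Karlsson property if there is an equicoarse $\Upsilon$ containing an arc between any two points of $X$ such that for every $u\in\mathfrak{U}_f$ there is a bounded $S\subseteq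 X$ with every arc in $\Upsilon$ whose image misses $S$ having $u$-small image. *)

From HB Require Import structures.
From mathcomp Require Import all_boot all_order all_algebra.
From mathcomp Require Import all_classical all_reals all_analysis.

Set Implicit Arguments.
Unset Strict Implicit.
Unset Printing Implicit Defensive.

Import Order.TTheory GRing.Theory Num.Theory.
Local Open Scope classical_set_scope.
Local Open Scope ring_scope.

Section Defs.
Context {R : realType}.

(* bounded subsets of a metric space (the bounded coarse structure eps_d) *)
Definition mbounded {M : metricType R} (A : set M) : Prop :=
  exists (x0 : M) (r : R), forall a, A a -> mdist x0 a <= r.

Definition proper_metric (M : metricType R) : Prop :=
  forall A : set M, closed A -> mbounded A -> compact A.

Definition coarse_map {M N : metricType R} (g : M -> N) : Prop :=
  (forall B : set N, mbounded B -> mbounded (g @^-1` B)) /\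
  (forall r : R, exists s : R, forall a b : M,
      mdist a b <= r -> mdist (g a) (g b) <= s).

Definition close_maps {M N : metricType R} (g h : M -> N) : Prop :=
  exists c : R, forall a : M, mdist (g a) (h a) <= c.

Definition coarse_equivalence_with {M N : metricType R}
    (g : M -> N) (h : N -> M) : Prop :=
  [/\ coarse_map g, coarse_map h,
      close_maps (g \o h) id & close_maps (h \o g) id].

Variable W : topologicalType.

Definition admissible {M : metricType R} (f : set M -> set W) : Prop :=
  [/\ forall A, closed A -> closed (f A),
      f set0 = set0 &
      forall A B, closed A -> closed B -> f (A `|` B) = f A `|` f B].

Section Sum.
Variables (M : metricType R) (f : set M -> set W).

Definition sum_closed (D : set (M + W)%type) : Prop :=
  [/\ closed (inl @^-1` D), closed (inr @^-1` D) &
      f (inl @^-1` D) `<=` inr @^-1` D].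

Definition sum_open (U : set (M + W)%type) : Prop := sum_closed (~` U).

Definition sum_compact : Prop :=
  forall (I : Type) (U : I -> set (M + W)%type),
    (forall i, sum_open (U i)) -> (forall p, exists i, U i p) ->
    exists F : set I, finite_set F /\ forall p, exists2 i, F i & U i p.

Definition sum_hausdorff : Prop :=
  forall p q : (M + W)%type, p <> q ->
    exists U V, [/\ sum_open U, sum_open V, U p, V q & U `&` V = set0].

Definition sum_dense : Prop :=
  forall D, sum_closed D -> (forall x : M, D (inl x)) -> D = setT.

Definition compactification : Prop :=
  [/\ sum_compact, sum_hausdorff & sum_dense].

(* the (unique) uniformity of the compact Hausdorff space M +_f W:
   the neighbourhoods of the diagonal in the product topology *)
Definition unif (u : set ((M + W) * (M + W))%type) : Prop :=
  exists O : set ((M + W) * (M + W))%type,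
    [/\ O `<=` u, (forall p, O (p, p)) &
        forall a b, O (a, b) -> exists U V,
          [/\ sum_open U, sum_open V, U a, V b &
              forall a' b', U a' -> V b' -> O (a', b')]].

(* an arc is a pair (t, lam) where lam is considered on [0,t] *)
Definition arc_dom (t : R) : set R := [set a | 0 <= a <= t].

Definition arc_image (e : R * (R -> M)) : set M := e.2 @` arc_dom e.1.

Definition coarse_arc (e : R * (R -> M)) : Prop :=
  [/\ 0 <= e.1,
      (forall r : R, exists s : R, forall a b, arc_dom e.1 a -> arc_dom e.1 b ->
          `|a - b| <= r -> mdist (e.2 a) (e.2 b) <= s) &
      (forall r : R, exists s : R, forall a b, arc_dom e.1 a -> arc_dom e.1 b ->
          mdist (e.2 a) (e.2 b) <= r -> `|a - b| <= s)].

Definition arc_between (x y : M) (e : R * (R -> M)) : Prop :=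
  coarse_arc e /\ e.2 0 = x /\ e.2 e.1 = y.

Definition equicoarse (Ups : set (R * (R -> M))) : Prop :=
  (forall r : R, exists s : R, forall e a b, Ups e ->
      arc_dom e.1 a -> arc_dom e.1 b ->
      `|a - b| < r -> mdist (e.2 a) (e.2 b) < s) /\
  (forall r : R, exists s : R, forall e a b, Ups e ->
      arc_dom e.1 a -> arc_dom e.1 b ->
      mdist (e.2 a) (e.2 b) < r -> `|a - b| < s).

Definition usmall (u : set ((M + W) * (M + W))%type) (S : set M) : Prop :=
  forall p q, S p -> S q -> u (inl p, inl q).

Definition coarse_Karlsson : Prop :=
  exists Ups : set (R * (R -> M)),
    [/\ (forall e, Ups e -> coarse_arc e),
        equicoarse Ups,
        (forall x y : M, exists2 e, Ups e & arc_between x y e) &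
        (forall u, unif u -> exists S : set M, mbounded S /\
            forall e, Ups e -> arc_image e `&` S = set0 ->
              usmall u (arc_image e))].

End Sum.

Definition fstar {X Y : metricType R} (f : set X -> set W) (pi : Y -> X)
  (A : set Y) : set W := closure (f (closure (pi @` A))).

End Defs.

(* Coarse invariance of the boundary: if a closed set A of X lies within
   distance k of a closed set B, then f A ⊆ f B.  Otherwise a point w of
   f A \ f B is separated from the closed set B ∪ f B of X +_f W by disjoint
   open sets N ∋ w and G ⊇ B ∪ f B, and the Karlsson property for the entourage
   generated by G and the complement of B ∪ f B gives a bounded set S.  Since w
   is a limit of points of A, some a ∈ A ∩ N lies far from S; an arc of the
   family from a to a point of B within k of a stays near a, so it misses S and
   is small, which is impossible because its ends lie in N and in B.

   Coarse invariance makes varpi + id : X +_f W -> Y +_f* W continuous, while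
   pi + id : Y +_f* W -> X +_f W is continuous by construction of f*.  Closed
   subsets of Y +_f* W missing W are bounded, so compactness of Y +_f* W
   follows from that of X +_f W and properness of Y; Hausdorffness is pulled
   back along pi + id.  The arcs for Y follow varpi applied to the arcs of X up
   to a bounded error, and an entourage of Y +_f* W pulled back along
   varpi + id gives the bounded set required by the Karlsson property. *)

From HB Require Import structures.
From mathcomp Require Import all_boot all_order all_algebra.
From mathcomp Require Import all_classical all_reals all_analysis.
From mathcomp Require Import finmap lra.

Import Order.TTheory GRing.Theory Num.Theory.
Local Open Scope classical_set_scope.
Local Open Scope ring_scope.

Set Implicit Arguments.
Unset Strict Implicit.
Unset Printing Implicit Defensive.

(* [compact_cover] is only stated for pointed spaces; a nonempty set lends
   its space a point. *)
Definition pointed_at (T : topologicalType) (x : T) : Type := T.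
HB.instance Definition _ (T : topologicalType) (x : T) :=
  Topological.on (pointed_at x).
HB.instance Definition _ (T : topologicalType) (x : T) :=
  isPointed.Build (pointed_at x) x.

Lemma compact_coverP (T : topologicalType) (A : set T) :
  compact A <-> cover_compact A.
Proof.
have [[a _]|A0] := pselect (exists a, A a).
  have E := @compact_cover (pointed_at a).
  split=> hA.
    by have : @compact (pointed_at a) A := hA; rewrite E.
  by have : @cover_compact (pointed_at a) A := hA; rewrite -E.
have -> : A = set0 by apply/seteqP; split=> // x Ax; apply: A0; exists x.
by split=> _; [move=> I D f _ _; exists fset0 | exact: compact0].
Qed.

Section MetricFacts.
Context {R : realType} (M : metricType R).
Implicit Types (x y z : M) (A B : set M) (k r : R).

Lemma mdist_perturb x x' y y' k l : mdist x x' <= k -> mdist y y' <= l ->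
  mdist x y <= mdist x' y' + k + l.
Proof.
move=> hx hy; have := metric_triangle x x' y; have := metric_triangle x' y' y.
by rewrite (metric_sym y y') in hy; lra.
Qed.

Lemma mball_open x r : open (ball x r).
Proof.
rewrite openE => y; rewrite {1}ballEmdist /= => xy; rewrite /interior.
have yB : nbhs y (ball y (r - mdist x y)).
  by apply: nbhsx_ballx; rewrite subr_gt0.
apply: (filterS _ yB) => z; rewrite !ballEmdist /= => yz.
by have := metric_triangle x y z; lra.
Qed.

Lemma closed_mdist_le x r : closed [set z | mdist x z <= r].
Proof.
rewrite -openC (_ : ~` _ = [set z | r < mdist x z]); last first.
  by apply/seteqP; split=> z /=; rewrite ltNge => /negP.
rewrite openE => y /= ry; rewrite /interior.
have yB : nbhs y (ball y (mdist x y - r)).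
  by apply: nbhsx_ballx; rewrite subr_gt0.
apply: (filterS _ yB) => z; rewrite ballEmdist /= => yz.
by have := metric_triangle x z y; rewrite (metric_sym z y); lra.
Qed.

Definition thicken A k : set M := [set a | exists2 b, A b & mdist a b <= k].

Lemma thicken_thicken A k l : thicken (thicken A k) l `<=` thicken A (l + k).
Proof.
move=> a [b [c Ac bc] ab]; exists c => //.
by apply: le_trans (metric_triangle a b c) _; exact: lerD.
Qed.

Lemma closure_thicken A k : 0 < k -> closure A `<=` thicken A k.
Proof.
move=> k0 a /(_ _ (nbhsx_ballx a _ k0)) [b [Ab]].
by rewrite ballEmdist /= => ab; exists b => //; exact: ltW.
Qed.

Lemma mbounded_setU A B : mbounded A -> mbounded B -> mbounded (A `|` B).
Proof.
move=> [a0 [r1 H1]] [b0 [r2 H2]]; exists a0, (Num.max r1 (mdist a0 b0 + r2)).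
move=> z [/H1 Az|/H2 Bz]; rewrite le_max; apply/orP; [left=> //|right].
by have := metric_triangle a0 b0 z; lra.
Qed.

Lemma mbounded_thicken A k : mbounded A -> mbounded (thicken A k).
Proof.
move=> [x0 [r H]]; exists x0, (r + k) => a [b /H Ab ab].
by have := metric_triangle x0 b a; rewrite (metric_sym b a); lra.
Qed.

Lemma compact_mbounded (x0 : M) A : compact A -> mbounded A.
Proof.
move=> /compact_coverP cA.
have balls_cover : A `<=` \bigcup_(n in setT) ball x0 n%:R.
  move=> a _; exists (Num.Def.trunc (mdist x0 a)).+1 => //.
  by rewrite ballEmdist /=; exact: truncnS_gt.
have [D _ cov] := cA _ _ _ (fun n _ => mball_open x0 n%:R) balls_cover.
exists x0, (\max_(n <- D) n)%:R => a /cov [n Dn].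
rewrite ballEmdist /= => /ltW /le_trans; apply.
by rewrite ler_nat; exact: leq_bigmax_seq.
Qed.

End MetricFacts.

Definition sum_set {M W : Type} (A : set M) (V : set W) : set (M + W) :=
  [set p | match p with inl x => A x | inr w => V w end].

Section SumOpen.
Context {R : realType} {W : topologicalType} {M : metricType R}.
Variables (g : set M -> set W) (Hg : admissible g).

Lemma admissibleS (A B : set M) : closed A -> closed B -> A `<=` B ->
  g A `<=` g B.
Proof.
have [_ _ gU] := Hg; move=> cA cB /setUidr <-.
by rewrite gU //; exact: subsetUl.
Qed.

Lemma sum_openT : sum_open g setT.
Proof.
have [_ g0 _] := Hg; rewrite /sum_open setCT.
by split; rewrite ?preimage_set0 ?g0 //; exact: closed0.
Qed.

Lemma sum_openI : setI_closed (sum_open g).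
Proof.
have [_ _ gU] := Hg; move=> U V [cU cU' sU] [cV cV' sV].
rewrite /sum_open setCI; split; rewrite !preimage_setU; try exact: closedU.
by rewrite gU //; exact: setUSS.
Qed.

Lemma sum_open_bigcup (I : Type) (U : I -> set (M + W)) :
  (forall i, sum_open g (U i)) -> sum_open g (\bigcup_i U i).
Proof.
move=> oU; rewrite /sum_open setC_bigcup.
have cl_l : closed (inl @^-1` \bigcap_i ~` U i).
  by rewrite preimage_bigcap; apply: closed_bigI => i _; case: (oU i).
split=> //.
  by rewrite preimage_bigcap; apply: closed_bigI => i _; case: (oU i).
move=> w gw i _; have [cl _ sub] := oU i; apply: sub.
by apply: admissibleS cl_l cl _ _ gw; apply: preimage_subset; exact: bigcap_inf.
Qed.

End SumOpen.

(* The admissibility proof is part of the type so that the topology instance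
   can use it. *)
Definition sum_space {R : realType} {W : topologicalType} {M : metricType R}
  (g : set M -> set W) (_ : admissible g) : Type := (M + W)%type.

HB.instance Definition _ R W M g (Hg : @admissible R W M g) :=
  Choice.on (sum_space Hg).
HB.instance Definition _ R W M g (Hg : @admissible R W M g) :=
  isOpenTopological.Build (sum_space Hg)
    (sum_openT Hg) (sum_openI Hg) (@sum_open_bigcup _ _ _ _ Hg).

Section SumSpace.
Context {R : realType} {W : topologicalType} {M : metricType R}.
Variables (g : set M -> set W) (Hg : admissible g).
Local Notation S := (sum_space Hg).

Lemma open_sumE (U : set S) : open U = sum_open g U.
Proof. by []. Qed.

Lemma closed_sumE (D : set S) : closed D = sum_closed g D.
Proof. by rewrite -openC open_sumE /sum_open setCK. Qed.

Lemma closed_sum_set (A : set M) (V : set W) :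
  closed A -> closed V -> g A `<=` V -> closed (sum_set A V : set S).
Proof. by rewrite closed_sumE. Qed.

Lemma open_inl_image (O : set M) : open O -> open (inl @` O : set S).
Proof.
move=> oO; rewrite -closedC (_ : ~` _ = sum_set (~` O) setT).
  by apply: closed_sum_set => //; exact: open_closedC.
apply/seteqP; split=> -[x|w] /=.
- by move=> nO Ox; apply: nO; exists x.
- by [].
- by move=> nOx [y Oy [yx]]; apply: nOx; rewrite -yx.
- by move=> _ [].
Qed.

Lemma inl_continuous : continuous (inl : M -> S).
Proof.
apply/continuousP => U; rewrite open_sumE => -[cl _ _].
by rewrite -closedC preimage_setC.
Qed.

Lemma sum_hausdorffP : sum_hausdorff g -> hausdorff_space S.
Proof.
rewrite open_hausdorff => HH p q /eqP pq.
have [U [V [oU oV Up Vq UV]]] := HH p q pq.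
by exists (U, V); [split; exact/mem_set | split=> //; apply/eqP].
Qed.

Lemma sum_compactE : sum_compact g <-> compact [set: S].
Proof.
rewrite compact_coverP; split=> [Hc J D U oU cov | cT J U oU cov].
  pose V j : set S := [set p | D j /\ U j p].
  have oV j : sum_open g (V j).
    have [Dj|nDj] := pselect (D j).
      rewrite (_ : V j = U j); first exact: oU.
      by apply/seteqP; split=> [p []|p] //.
    rewrite (_ : V j = set0); first exact: (@open0 S).
    by apply/seteqP; split=> p // [].
  have covV p : exists j, V j p by have [j Dj Ujp] := cov p I; exists j.
  have [F [fF covF]] := Hc J V oV covV.
  have [B EB] := finite_fsetP.1 (finite_setIr D fF).
  exists B => [j jB|p _].
    have : (D `&` F) j by rewrite EB; exact: jB.
    by case=> Dj _; exact/mem_set.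
  have [j Fj [Dj Ujp]] := covF p; exists j => //.
  have : (D `&` F) j by [].
  by rewrite EB.
have covT : [set: S] `<=` \bigcup_(j in [set: {classic J}]) U j.
  by move=> p _; have [j Ujp] := cov p; exists j.
have [B _ covB] := cT {classic J} setT U (fun j _ => oU j) covT.
exists [set` B]; split; first exact: (finite_fset B).
by move=> p; have [j Bj Ujp] := covB p I; exists j.
Qed.

Lemma compact_sum_inlP (A : set M) :
  compact (inl @` A : set S) -> compact A.
Proof.
rewrite !compact_coverP => cA J D U oU cov.
have covl : inl @` A `<=` \bigcup_(j in D) (inl @` U j : set S).
  by move=> _ [a Aa <-]; have [j Dj Uja] := cov a Aa; exists j => //; exists a.
have [B sB covB] := cA J D _ (fun j Dj => open_inl_image (oU j Dj)) covl.
exists B => // a Aa.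
have [j Bj [b Ujb [ba]]] := covB (inl a) (ex_intro2 _ _ a Aa erefl).
by exists j => //; rewrite -ba.
Qed.

Lemma unif_cover (J : Type) (U : J -> set S) : (forall j, open (U j)) ->
  (forall p, exists j, U j p) ->
  unif g [set PQ | exists j, U j PQ.1 /\ U j PQ.2].
Proof.
move=> oU cov; exists [set PQ | exists j, U j PQ.1 /\ U j PQ.2]; split=> //.
  by move=> p; have [j Ujp] := cov p; exists j.
move=> a b [j [Ua Ub]]; exists (U j), (U j).
by split=> //; [exact: oU | exact: oU | move=> a' b' Ua' Ub'; exists j].
Qed.

Lemma unif_small_nbhs (u : set (S * S)) (p : S) : unif g u ->
  exists2 G : set S, open G /\ G p & forall a b, G a -> G b -> u (a, b).
Proof.
move=> [E [Eu Ediag Eloc]].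
have [U [V [oU oV Up Vp UV]]] := Eloc p p (Ediag p).
exists (U `&` V); first by split; [exact: openI | by []].
by move=> a b [Ua _] [_ Vb]; exact/Eu/UV.
Qed.

Lemma compact_boundary_eq0 (A : set M) :
  sum_hausdorff g -> compact A -> g A = set0.
Proof.
move=> HH cA; have cA' : compact (inl @` A : set S).
  apply: continuous_compact cA; apply: continuous_subspaceT.
  exact: inl_continuous.
have := compact_closed (sum_hausdorffP HH) cA'; rewrite closed_sumE => -[_ _].
rewrite (_ : inl @^-1` _ = A); last first.
  by apply/seteqP; split=> [x [y Ay [<-]] | x Ax] //; exists x.
by move=> sub; apply/seteqP; split=> // w /sub [].
Qed.

Lemma boundary_eq0_compact (A : set M) :
  sum_compact g -> closed A -> g A = set0 -> compact A.
Proof.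
move=> /sum_compactE cT cA gA; apply: compact_sum_inlP.
apply: (subclosed_compact _ cT) => //.
rewrite (_ : inl @` A = sum_set A set0).
  by apply: closed_sum_set => //; [exact: closed0 | rewrite gA].
by apply/seteqP; split=> [_ [a Aa <-] | [a Aa|]] //; exists a.
Qed.

Lemma far_point_at_infinity (A : set M) (N : set S) (w : W) (x1 : M) (r : R) :
  proper_metric M -> sum_hausdorff g -> closed A -> g A w ->
  open N -> N (inr w) -> exists a, [/\ A a, N (inl a) & r < mdist x1 a].
Proof.
move=> pM HH cA gAw; rewrite open_sumE => -[cN _ sN] Nw.
apply: contrapT => nofar.
pose A1 := A `&` [set z | mdist x1 z <= r].
pose A2 := A `&` inl @^-1` (~` N).
have cA1 : closed A1 by apply: closedI => //; exact: closed_mdist_le.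
have cA2 : closed A2 by exact: closedI.
have gA1 : g A1 = set0.
  by apply: compact_boundary_eq0 HH (pM _ cA1 _); exists x1, r => z [].
have AA : A `<=` A1 `|` A2.
  move=> z Az; have [Nz|nNz] := pselect (N (inl z)); [left|right]; split=> //=.
  by rewrite leNgt; apply/negP => far; apply: nofar; exists z.
have [_ _ gU] := Hg.
have := admissibleS Hg cA (closedU cA1 cA2) AA gAw; rewrite gU // gA1 set0U.
by move=> /(admissibleS Hg cA2 cN (@subIsetr _ _ _)) /sN.
Qed.

End SumSpace.

Lemma compact_hausdorff_separate (T : topologicalType) (E : set T) (p : T) :
  hausdorff_space T -> compact [set: T] -> closed E -> ~ E p ->
  exists N G, [/\ open N, open G, N p, E `<=` G & N `&` G = set0].
Proof.
move=> hT cT cE nEp.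
have pE : nbhs p (~` E).
  by apply: open_nbhs_nbhs; split=> //; exact: closed_openC.
have [V pV clVE] := compact_regular hT cT (@filterT _ _ _) pE.
exists V°, (~` closure V); split.
- exact: open_interior.
- exact/closed_openC/closed_closure.
- exact: pV.
- by move=> x Ex clVx; exact: clVE _ clVx Ex.
- apply/seteqP; split=> // x [/interior_subset Vx]; apply.
  exact: subset_closure.
Qed.

Section ArcFacts.
Context {R : realType} (M : metricType R) (Ups : set (R * (R -> M))).
Hypothesis Ueq : equicoarse Ups.

Lemma equicoarse_coarse_arc e : Ups e -> 0 <= e.1 -> coarse_arc e.
Proof.
have [eq1 eq2] := Ueq; move=> Ue t0; split=> // r.
- have [s Hs] := eq1 (r + 1); exists s => a b da db ab.
  by apply/ltW/(Hs e) => //; lra.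
- have [s Hs] := eq2 (r + 1); exists s => a b da db ab.
  by apply/ltW/(Hs e) => //; lra.
Qed.

Lemma equicoarse_near_start (k : R) : exists s, forall e a, Ups e ->
  arc_dom e.1 a -> mdist (e.2 0) (e.2 e.1) <= k -> mdist (e.2 0) (e.2 a) < s.
Proof.
have [eq1 eq2] := Ueq; have [s0 Hs0] := eq2 (k + 1); have [s Hs] := eq1 s0.
exists s => e a Ue da d0t; have /andP [a0 ae] := da.
have t0 : 0 <= e.1 := le_trans a0 ae.
have dom0 : arc_dom e.1 0 by rewrite /arc_dom /= lexx t0.
have domt : arc_dom e.1 e.1 by rewrite /arc_dom /= lexx t0.
have ts : `|0 - e.1| < s0 by apply: (Hs0 e) => //; lra.
by apply: (Hs e) => //; move: ts; rewrite !sub0r !normrN !ger0_norm //; lra.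
Qed.

End ArcFacts.

(* [mbounded] asks for a base point, so an empty space has no bounded sets. *)
Lemma coarse_Karlsson_inhabited {R : realType} {W : topologicalType}
    {M : metricType R} (g : set M -> set W) :
  admissible g -> coarse_Karlsson g -> inhabited M.
Proof.
move=> Hg [Ups [_ _ _ Usmall]].
have uT : unif g setT.
  exists setT; split=> // a b _; exists setT, setT.
  by split=> //; exact: sum_openT.
by have [S [[x0 _] _]] := Usmall _ uT.
Qed.

Section CoarseInvariance.
Context {R : realType} {W : topologicalType} {X : metricType R}.
Variables (f : set X -> set W) (Hf : admissible f).
Hypotheses (cf : compactification f) (pX : proper_metric X)
  (HK : coarse_Karlsson f).

Lemma admissible_coarse_invariant (A B : set X) (k : R) :
  closed A -> closed B -> A `<=` thicken B k -> f A `<=` f B.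
Proof.
move=> cA cB AB w fAw; apply: contrapT => nfBw.
have [Hc HH _] := cf; have [Ups [_ Ueq Ubetw Usmall]] := HK.
pose E : set (sum_space Hf) := sum_set B (f B).
have cE : closed E.
  by apply: closed_sum_set => //; have [clf _ _] := Hf; exact: clf.
have [N [G [oN oG Nw EG NG]]] := compact_hausdorff_separate
  (sum_hausdorffP HH) ((sum_compactE Hf).1 Hc) cE (nfBw : ~ E (inr w)).
pose U (j : bool) := if j then ~` E else G.
have covU p : exists j, U j p.
  by have [Ep|nEp] := pselect (E p); [exists false; exact: EG | exists true].
have oU j : open (U j) by case: j => //; exact: closed_openC.
have [S [[x1 [r HS]] Hsm]] := Usmall _ (unif_cover oU covU).
have [s Hs] := equicoarse_near_start Ueq k.
have [a [Aa Na far]] := far_point_at_infinity x1 (r + s) pX HH cA fAw oN Nw.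
have [b Bb ab] := AB a Aa.
have [e Ue [[t0 _ _] [e0 et]]] := Ubetw a b.
have miss : arc_image e `&` S = set0.
  apply/seteqP; split=> // _ [[z dz <-] /HS x1z].
  have := Hs e z Ue dz; rewrite e0 et => /(_ ab) az.
  have := metric_triangle x1 (e.2 z) a.
  by rewrite (metric_sym (e.2 z) a); lra.
have dom0 : arc_dom e.1 0 by rewrite /arc_dom /= lexx t0.
have domt : arc_dom e.1 e.1 by rewrite /arc_dom /= lexx t0.
have [[] /= [Ua Ub]] := Hsm e Ue miss a b (ex_intro2 _ _ 0 dom0 e0)
  (ex_intro2 _ _ e.1 domt et); first exact: Ub.
by have : (N `&` G) (inl a) by []; rewrite NG.
Qed.

End CoarseInvariance.

Section Clamp.
Context {R : realFieldType}.

Lemma dist_minr_le (a b t : R) : `|Num.min a t - Num.min b t| <= `|a - b|.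
Proof.
have h1 := ler_norm (a - b).
have h2 : - (a - b) <= `|a - b| by rewrite -normrN ler_norm.
rewrite ler_norml; case: (leP a t) => ha; case: (leP b t) => hb;
  rewrite ?(min_l ha) ?(min_r (ltW ha)) ?(min_l hb) ?(min_r (ltW hb));
  apply/andP; split; lra.
Qed.

Lemma dist_le_minr (a b t : R) : a <= t + 1 -> b <= t + 1 ->
  `|a - b| <= `|Num.min a t - Num.min b t| + 1.
Proof.
move=> ha1 hb1; set m := Num.min a t - Num.min b t.
have h1 := ler_norm m.
have h2 : - m <= `|m| by rewrite -normrN ler_norm.
rewrite ler_norml /m in h1 h2 *; case: (leP a t) => ha; case: (leP b t) => hb;
  rewrite ?(min_l ha) ?(min_r (ltW ha)) ?(min_l hb) ?(min_r (ltW hb)) in h1 h2 *;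
  apply/andP; split; lra.
Qed.

End Clamp.

Section ShadowArcs.
Context {R : realType} {X Y : metricType R}.
Variables (pi : Y -> X) (varpi : X -> Y) (Ups : set (R * (R -> X))) (c : R).
Hypotheses (ce : coarse_equivalence_with pi varpi)
  (Uarc : forall e, Ups e -> coarse_arc e) (Ueq : equicoarse Ups).

(* The extra unit of length leaves room to move both endpoints onto the
   prescribed points of [Y]. *)
Definition shadows (e : R * (R -> X)) (e' : R * (R -> Y)) : Prop :=
  e'.1 = e.1 + 1 /\
  forall a, arc_dom e'.1 a -> mdist (e'.2 a) (varpi (e.2 (Num.min a e.1))) <= c.

Definition shadow_arcs : set (R * (R -> Y)) :=
  [set e' | exists2 e, Ups e & shadows e e'].

Lemma shadows_disjoint e e' (S : set X) : shadows e e' ->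
  arc_image e' `&` thicken (varpi @` S) c = set0 -> arc_image e `&` S = set0.
Proof.
move=> [te Hmu] miss; apply/seteqP; split=> // _ [[x dx <-] Sx].
have /andP [x0 xt] := dx.
have dx' : arc_dom e'.1 x by rewrite te /arc_dom /= x0 /=; lra.
have : (arc_image e' `&` thicken (varpi @` S) c) (e'.2 x).
  split; first by exists x.
  exists (varpi (e.2 x)); first by exists (e.2 x).
  by have := Hmu x dx'; rewrite min_l.
by rewrite miss.
Qed.

Lemma shadows_dom e e' a : Ups e -> shadows e e' -> arc_dom e'.1 a ->
  arc_dom e.1 (Num.min a e.1).
Proof.
move=> /Uarc [t0 _ _] [-> _] /andP [a0 _].
by apply/andP; split; [rewrite le_min a0 t0 | rewrite ge_min lexx orbT].
Qed.

Lemma shadow_arcs_equicoarse : equicoarse shadow_arcs.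
Proof.
have [eq1 eq2] := Ueq; have [[_ pib] [_ vb] [c1 Hc1] _] := ce; split=> r.
  have [s1 Hs1] := eq1 r; have [s2 Hs2] := vb s1.
  exists (s2 + c + c + 1) => e' a b [e Ue [te Hmu]] da db ab.
  have da' := shadows_dom Ue (conj te Hmu) da.
  have db' := shadows_dom Ue (conj te Hmu) db.
  have /ltW := Hs1 e _ _ Ue da' db' (le_lt_trans (dist_minr_le _ _ _) ab).
  move=> /Hs2; have := mdist_perturb (Hmu a da) (Hmu b db); lra.
have [s3 Hs3] := pib (r + c + c); have [s4 Hs4] := eq2 (s3 + c1 + c1 + 1).
exists (s4 + 1) => e' a b [e Ue [te Hmu]] da db ab.
have near_a := Hmu a da; rewrite metric_sym in near_a.
have near_b := Hmu b db; rewrite metric_sym in near_b.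
have /Hs3 pvab : mdist (varpi (e.2 (Num.min a e.1)))
    (varpi (e.2 (Num.min b e.1))) <= r + c + c.
  by have := mdist_perturb near_a near_b; lra.
have ha := Hc1 (e.2 (Num.min a e.1)); rewrite /= metric_sym in ha.
have hb := Hc1 (e.2 (Num.min b e.1)); rewrite /= metric_sym in hb.
have := mdist_perturb ha hb => eab.
have da' := shadows_dom Ue (conj te Hmu) da.
have db' := shadows_dom Ue (conj te Hmu) db.
have /(Hs4 e _ _ Ue da' db') :
  mdist (e.2 (Num.min a e.1)) (e.2 (Num.min b e.1)) < s3 + c1 + c1 + 1 by lra.
move: da db; rewrite te => /andP [_ ha1] /andP [_ hb1].
by have := dist_le_minr ha1 hb1; lra.
Qed.

Lemma shadow_arcs_coarse e' : shadow_arcs e' -> coarse_arc e'.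
Proof.
move=> Se'; apply: (equicoarse_coarse_arc shadow_arcs_equicoarse Se').
by case: Se' => e /Uarc [t0 _ _] [-> _]; lra.
Qed.

Lemma shadow_arcs_between :
  (forall x y : X, exists2 e, Ups e & arc_between x y e) ->
  (forall y, mdist (varpi (pi y)) y <= c) ->
  forall y1 y2, exists2 e', shadow_arcs e' & arc_between y1 y2 e'.
Proof.
move=> Ubetw Hc y1 y2.
have [e Ue [[t0 _ _] [e0 et]]] := Ubetw (pi y1) (pi y2).
pose mu a := if a == 0 then y1 else if a == e.1 + 1 then y2
  else varpi (e.2 (Num.min a e.1)).
have c0 : 0 <= c := le_trans (mdist_ge0 _ _) (Hc y1).
have t1 : (e.1 + 1 == 0) = false by apply/eqP; lra.
have Se : shadow_arcs (e.1 + 1, mu).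
  exists e => //; split=> // a _ /=; rewrite /mu.
  case: eqP => [->|_]; first by rewrite (min_l t0) e0 metric_sym.
  case: eqP => [->|_]; last by rewrite mdistxx.
  by rewrite min_r ?et 1?metric_sym //; lra.
exists (e.1 + 1, mu) => //; split; last by rewrite /mu /= eqxx t1 eqxx.
exact: shadow_arcs_coarse.
Qed.

End ShadowArcs.

Lemma mbounded_image {R : realType} {M N : metricType R} (h : M -> N)
  (A : set M) : coarse_map h -> mbounded A -> mbounded (h @` A).
Proof.
move=> [_ hb] [x0 [r HA]]; have [s Hs] := hb r.
by exists (h x0), s => _ [a /HA x0a <-]; exact: Hs.
Qed.

Definition sum_map {M N W : Type} (h : M -> N) (p : M + W) : N + W :=
  match p with inl x => inl (h x) | inr w => inr w end.

Section Pullback.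
Context {R : realType} {X Y : metricType R} {W : topologicalType}.
Variables (f : set X -> set W) (pi : Y -> X) (varpi : X -> Y).
Hypotheses (Hf : admissible f) (ce : coarse_equivalence_with pi varpi).
Hypotheses (cf : compactification f) (pX : proper_metric X)
  (pY : proper_metric Y) (HK : coarse_Karlsson f).
Hypotheses (cpi : continuous pi) (cvarpi : continuous varpi).

Local Notation fs := (fstar f pi).
Local Notation f_coarse_invariant := (admissible_coarse_invariant Hf cf pX HK).

Lemma admissible_fstar : admissible fs.
Proof.
have [clf f0 fU] := Hf; split.
- by move=> A _; exact: closed_closure.
- by rewrite /fstar image_set0 closure0 f0 closure0.
- move=> A B _ _; rewrite /fstar image_setU closureU fU ?closureU //;
    exact: closed_closure.
Qed.

Local Notation SX := (sum_space Hf).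
Local Notation SY := (sum_space admissible_fstar).

Lemma fstar_thicken (A B : set Y) (r : R) :
  A `<=` thicken B r -> fs A `<=` fs B.
Proof.
have [[_ pib] _ _ _] := ce; have [s Hs] := pib r.
move=> AB; apply: closureS; apply: (f_coarse_invariant (k := 1 + s)) => //;
  try exact: closed_closure.
move=> x /(closure_thicken ltr01) [_ [a Aa <-] xa].
have [b Bb /Hs ab] := AB a Aa.
exists (pi b); first by apply: subset_closure; exists b.
by have := metric_triangle x (pi a) (pi b); lra.
Qed.

Lemma sum_map_varpi_continuous : continuous (sum_map varpi : SX -> SY).
Proof.
apply/continuousP => U; rewrite !open_sumE => -[cl cr sub].
have [_ _ [k Hk] _] := ce.
have clv : closed (varpi @^-1` (inl @^-1` (~` U))) by exact: closed_comp.
rewrite /sum_open preimage_setC; split=> //.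
apply: subset_trans sub; apply: subset_trans (@subset_closure _ _).
change (f (varpi @^-1` (inl @^-1` (~` U))) `<=`
  f (closure (pi @` (inl @^-1` (~` U))))).
apply: (f_coarse_invariant (k := k)); [exact: clv | exact: closed_closure |].
move=> x Ux; exists (pi (varpi x)); last by rewrite metric_sym; exact: Hk.
by apply: subset_closure; exists (varpi x).
Qed.

Lemma sum_map_pi_continuous : continuous (sum_map pi : SY -> SX).
Proof.
apply/continuousP => U; rewrite !open_sumE => -[cl cr sub].
have clp : closed (pi @^-1` (inl @^-1` (~` U))) by exact: closed_comp.
rewrite /sum_open preimage_setC; split=> //.
have img : closure (pi @` (pi @^-1` (inl @^-1` (~` U)))) `<=` inl @^-1` (~` U).
  by move=> x /(closureS (@image_preimage_subset _ _ pi _)) /cl.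
have := subset_trans (admissibleS Hf (@closed_closure _ _) cl img) sub.
by move=> /closureS sub' w /sub'; exact: cr.
Qed.

Lemma fstar_bounded (D : set SY) : closed D -> (forall w, ~ D (inr w)) ->
  mbounded (inl @^-1` D).
Proof.
rewrite closed_sumE => -[cD _ sD] nW.
have [Hc _ _] := cf; have [x0] := coarse_Karlsson_inhabited Hf HK.
have f0 : f (closure (pi @` (inl @^-1` D))) = set0.
  apply/seteqP; split=> // w fw; apply: (nW w); apply: sD.
  exact: subset_closure.
have [[pib _] _ _ _] := ce.
have := boundary_eq0_compact Hf Hc (@closed_closure _ _) f0.
move=> /(compact_mbounded x0) /pib [y1 [r Hr]]; exists y1, r => y Dy; apply: Hr.
by apply: subset_closure; exists y.
Qed.

Lemma fstar_compact : sum_compact fs.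
Proof.
have [Hc _ _] := cf.
apply/(sum_compactE admissible_fstar)/compact_coverP => J D U oU cov.
have [D1 sD1 cov1] := (compact_coverP _).1 ((sum_compactE Hf).1 Hc) J D
  (fun j => sum_map varpi @^-1` U j)
  (fun j Dj => (continuousP _).1 sum_map_varpi_continuous _ (oU j Dj))
  (fun p _ => cov (sum_map varpi p) I).
pose Un := \bigcup_(j in [set` D1]) U j.
have oUn : open Un by apply: bigcup_open => j /sD1 /set_mem; exact: oU.
have WUn w : Un (inr w) by have [j D1j Ujw] := cov1 (inr w) I; exists j.
pose K := inl @^-1` (~` Un).
have cK : closed K by move: oUn; rewrite open_sumE => -[].
have bK : mbounded K.
  by apply: fstar_bounded => [|w]; [exact: open_closedC | apply; exact: WUn].
have kK : compact (inl @` K : set SY).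
  apply: continuous_compact (pY cK bK); apply: continuous_subspaceT.
  exact: inl_continuous.
have [D2 sD2 cov2] := (compact_coverP _).1 kK J D U oU (fun p _ => cov p I).
exists (D1 `|` D2)%fset => [j|p _].
  by rewrite in_fsetU => /orP[/sD1|/sD2].
have [[j D1j Ujp]|nUnp] := pselect (Un p).
  by exists j => //; rewrite /= in_fsetU D1j.
case: p nUnp => [y nUny|w /(_ (WUn w)) []].
have [j D2j Ujy] := cov2 (inl y) (ex_intro2 _ _ y nUny erefl).
by exists j => //; rewrite /= in_fsetU D2j orbT.
Qed.

Lemma fstar_hausdorff : sum_hausdorff fs.
Proof.
have [_ HH _] := cf.
have via_pi (p q : SY) : sum_map pi p <> sum_map pi q -> exists U V,
    [/\ sum_open fs U, sum_open fs V, U p, V q & U `&` V = set0].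
  move=> /HH [U [V [oU oV Up Vq UV]]].
  exists (sum_map pi @^-1` U), (sum_map pi @^-1` V); split => //.
  - exact: (continuousP _).1 sum_map_pi_continuous _ oU.
  - exact: (continuousP _).1 sum_map_pi_continuous _ oV.
  - by rewrite -preimage_setI UV preimage_set0.
case=> [y1|w1] [y2|w2] pq; try by apply: via_pi => -[].
- have /eqP y12 : y1 <> y2 by move=> e; apply: pq; rewrite e.
  have := @metric_hausdorff _ Y; rewrite open_hausdorff => /(_ _ _ y12).
  move=> [[A B] /= [/set_mem yA /set_mem yB] [oA oB /eqP AB]].
  exists (inl @` A), (inl @` B); split.
  + exact: (open_inl_image admissible_fstar).
  + exact: (open_inl_image admissible_fstar).
  + by exists y1.
  + by exists y2.
  + apply/seteqP; split=> // _ [[a Aa <-] [b Bb [ba]]].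
    have : (A `&` B) a by split=> //; rewrite -ba.
    by rewrite AB.
- by apply: via_pi => -[e]; apply: pq; rewrite e.
Qed.

Lemma fstar_dense : sum_dense fs.
Proof.
have [_ _ Hd] := cf; have [clf _ _] := Hf; have [_ _ [k Hk] _] := ce.
move=> D [_ _ sD] DY.
have fX : f setT = setT.
  have cE : sum_closed f (sum_set setT (f setT)) by split=> //; exact: clf.
  have /seteqP [_ E] := Hd _ cE (fun=> I).
  by apply/seteqP; split=> // w _; exact: (E (inr w) I).
have fsY : fs setT = setT.
  apply/seteqP; split=> // w _; apply: subset_closure.
  apply: (f_coarse_invariant (k := k));
    [exact: closedT | exact: closed_closure | | by rewrite fX].
  move=> x _; exists (pi (varpi x)); last by rewrite metric_sym; exact: Hk.
  by apply: subset_closure; exists (varpi x).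
apply/seteqP; split=> // -[y|w] _; first exact: DY.
apply: sD; rewrite (_ : inl @^-1` D = setT) ?fsY //.
by apply/seteqP; split=> // y _; exact: DY.
Qed.

Lemma fstar_unif_thick (u : set (SY * SY)) (r : R) (w : W) : unif fs u ->
  exists G G0 : set SY, [/\ open G, G (inr w),
    forall p q, G0 p -> G0 q -> u (p, q) &
    forall y y', G (inl y) -> mdist y y' <= r -> G0 (inl y')].
Proof.
move=> uu; have [G0 [oG0 G0w] G0u] := unif_small_nbhs (inr w : SY) uu.
move: (oG0); rewrite open_sumE => -[cD _ sD].
pose B := closure (thicken (inl @^-1` (~` G0)) r).
have cB : closed (sum_set B (fs B) : set SY).
  by apply: closed_sum_set => //; exact: closed_closure.
exists (G0 `&` ~` sum_set B (fs B)), G0; split=> //.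
- by apply: openI => //; rewrite openC.
- split=> // fsBw; apply: sD G0w; apply: (fstar_thicken (r := 1 + r)) fsBw.
  apply: subset_trans (thicken_thicken (k := r) (l := 1)).
  exact: closure_thicken ltr01.
- move=> y y' [_ nBy] yy'; apply: contrapT => nG0y'.
  by apply: nBy; apply: subset_closure; exists y'.
Qed.

Section ShadowSmall.
Variables (c s2 : R) (u : set (SY * SY)) (G G0 : W -> set SY).
Hypotheses
  (Hs2 : forall x x', mdist x x' <= 2 -> mdist (varpi x) (varpi x') <= s2)
  (HG : forall w, [/\ open (G w), G w (inr w),
    forall p q, G0 w p -> G0 w q -> u (p, q) &
    forall y y', G w (inl y) -> mdist y y' <= s2 + c + c -> G0 w (inl y')]).

Definition pullback_cover (i : W + X) : set SX :=
  match i with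
  | inl w => sum_map varpi @^-1` G w
  | inr x => inl @` ball x 1
  end.

Lemma pullback_cover_open i : open (pullback_cover i).
Proof.
case: i => [w|x] /=; last exact/open_inl_image/mball_open.
have [oG _ _ _] := HG w.
exact: (continuousP _).1 sum_map_varpi_continuous _ oG.
Qed.

Lemma pullback_cover_covers p : exists i, pullback_cover i p.
Proof.
case: p => [x|w]; last by exists (inl w); have [_ Gw _ _] := HG w.
by exists (inr x); exists x; rewrite // ballEmdist /= mdistxx.
Qed.

Lemma shadow_pair_small (x x' : X) (y y' : Y) :
  mdist y (varpi x) <= c -> mdist y' (varpi x') <= c ->
  (\bigcup_w G w) (inl y) ->
  (exists i, pullback_cover i (inl x) /\ pullback_cover i (inl x')) ->
  u (inl y, inl y').
Proof.
move=> yx y'x' [w0 _ Gy]; have c0 : 0 <= c := le_trans (mdist_ge0 _ _) yx.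
case=> -[w|z] /= [Vx Vx'].
  have /Hs2 xx : mdist x x <= 2 by rewrite mdistxx ler0n.
  have s20 : 0 <= s2 := le_trans (mdist_ge0 _ _) xx.
  have [_ _ G0u thick] := HG w.
  by apply: G0u; [apply: thick Vx _ | apply: thick Vx' _];
    rewrite metric_sym; lra.
move: Vx Vx' => [x1 zx [ex]] [x1' zx' [ex']]; subst x1 x1'.
rewrite ballEmdist /= in zx zx'.
have /Hs2 d2 : mdist x x' <= 2.
  by have := metric_triangle x z x'; rewrite (metric_sym x z); lra.
have s20 : 0 <= s2 := le_trans (mdist_ge0 _ _) d2.
have [_ _ G0u thick] := HG w0.
apply: G0u; apply: thick Gy _; first by rewrite mdistxx; lra.
by have := mdist_perturb yx y'x'; lra.
Qed.

End ShadowSmall.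

Lemma shadow_arcs_small (Ups : set (R * (R -> X))) (c : R)
    (u : set (SY * SY)) :
  (forall e, Ups e -> coarse_arc e) ->
  (forall v, unif f v -> exists S : set X, mbounded S /\
     forall e, Ups e -> arc_image e `&` S = set0 -> usmall v (arc_image e)) ->
  unif fs u -> exists S : set Y, mbounded S /\
    forall e', shadow_arcs varpi Ups c e' -> arc_image e' `&` S = set0 ->
      usmall u (arc_image e').
Proof.
move=> Uarc Usmall uu; have [_ cv _ _] := ce; have [_ vb] := cv.
have [s2 Hs2] := vb 2.
have /choice [G /choice [G0 HG]] :=
  fun w => fstar_unif_thick (s2 + c + c) w uu.
have [SX [bSX HsmX]] := Usmall _
  (unif_cover (pullback_cover_open HG) (pullback_cover_covers HG)).
pose Un := \bigcup_w G w.
have bK : mbounded (inl @^-1` (~` Un)).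
  apply: fstar_bounded => [|w]; last by apply; exists w => //; have [] := HG w.
  by rewrite closedC; apply: bigcup_open => w _; have [] := HG w.
exists (inl @^-1` (~` Un) `|` thicken (varpi @` SX) c); split.
  exact/(mbounded_setU bK)/mbounded_thicken/(mbounded_image cv).
move=> e' [e Ue [te Hmu]] miss _ _ [a da <-] [b db <-].
have misse := shadows_disjoint (conj te Hmu) (subsetI_eq0 (@subset_refl _ _)
  (@subsetUr _ _ _) miss).
have dom_min z : arc_dom e'.1 z -> arc_dom e.1 (Num.min z e.1).
  exact: (shadows_dom Uarc Ue (conj te Hmu)).
apply: (shadow_pair_small Hs2 HG (Hmu a da) (Hmu b db)).
  apply: contrapT => nU; have /seteqP [miss_a _] := miss.
  by apply: (miss_a (e'.2 a)); split; [exists a | left].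
have Ia : arc_image e (e.2 (Num.min a e.1)).
  by exists (Num.min a e.1) => //; exact: dom_min.
have Ib : arc_image e (e.2 (Num.min b e.1)).
  by exists (Num.min b e.1) => //; exact: dom_min.
exact: (HsmX e Ue misse _ _ Ia Ib).
Qed.

End Pullback.

Theorem mainTheorem17 (R : realType) (X Y : metricType R) (W : topologicalType)
  (f : set X -> set W) (pi : Y -> X) (varpi : X -> Y) :
  proper_metric X -> proper_metric Y ->
  continuous pi -> continuous varpi ->
  coarse_equivalence_with pi varpi ->
  admissible f ->
  compactification f -> coarse_Karlsson f ->
  compactification (fstar f pi) /\ coarse_Karlsson (fstar f pi).
Proof.
move=> pX pY cpi cvarpi ce Hf cf HK; split.
  split; first exact: (fstar_compact Hf ce cf pX pY HK cvarpi).
    exact: (fstar_hausdorff Hf cf cpi).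
  exact: (fstar_dense Hf ce cf pX HK).
have [Ups [Uarc Ueq Ubetw Usmall]] := HK; have [_ _ _ [c Hc]] := ce.
exists (shadow_arcs varpi Ups c); split.
- move=> e Se; exact: (shadow_arcs_coarse ce Uarc Ueq Se).
- exact: (shadow_arcs_equicoarse c ce Uarc Ueq).
- exact: (shadow_arcs_between ce Uarc Ueq Ubetw Hc).
- move=> u; exact: (shadow_arcs_small ce cf pX HK cvarpi c Uarc Usmall).
Qed.
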